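(* Let $m\ge2$ and $K^*>m$ be integers, set $L=K^*-m+1$, and let $\tau^s>1$. For $r\in[0,1]$ let $$f(r)=\frac{K^*!}{L!\,(m-2)!}\,r^{L}(1-r)^{m-2},$$ for $x\ge0$ and integers $l\ge1$ let $G_l(x)=e^{-x}\sum_{n=0}^{l-1}\frac{x^n}{n!}$, and for $c\ge0$ define $$P_d^s(c)=\int_0^{1/\tau^s}f(r)\,dr+\int_{1/\tau^s}^{1}f(r)\Big[1-\frac{1}{(r\tau^s)^{L}}\sum_{l=1}^{L}\binom{L}{l}(r\tau^s-1)^{l}\,G_l\!\big(c/\tau^s\big)\Big]dr .$$ Then $P_d^s$ is a strictly increasing function of $c$ on $[0,\infty)$.
   Context: In the paper, $P_d^s(c)$ is the detection probability of the adaptive detector $z^T\big(\sum_{k^*=-K^*}^{-1}z(k^* )z(k^* )^T\big)^{-1}z\gtrless\tau^s-1$ built from $K^*$ secondary residual samples, $m$ is the residual dimension, and $c=c_i^p(k)=a_i^T(k-1)\Sigma_{z_i^p}^{-1}a_i(k-1)$ is the non-centrality parameter induced by the attack. *)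

From Stdlib Require Import Reals Factorial.
From Coquelicot Require Import Coquelicot.
Open Scope R_scope.

Definition fdens (m Ks : nat) (r : R) : R :=
  let L := (Ks - m + 1)%nat in
  INR (fact Ks) / (INR (fact L) * INR (fact (m - 2))) * r ^ L * (1 - r) ^ (m - 2).

Definition G (l : nat) (x : R) : R :=
  exp (- x) * sum_f_R0 (fun n => x ^ n / INR (fact n)) (l - 1).

Definition inner (m Ks : nat) (tau c r : R) : R :=
  let L := (Ks - m + 1)%nat in
  1 - / (r * tau) ^ L *
      sum_f 1 L (fun l => Binomial.C L l * (r * tau - 1) ^ l * G l (c / tau)).

Definition Pds (m Ks : nat) (tau c : R) : R :=
  RInt (fdens m Ks) 0 (/ tau)
  + RInt (fun r => fdens m Ks r * inner m Ks tau c r) (/ tau) 1.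

(** G_l(x) = e^{-x} sum_{n<l} x^n/n! is the probability that a Poisson(x)
    variable is below l, so it strictly decreases in x: its derivative is
    -e^{-x} x^{l-1}/(l-1)!.  Hence, for r tau > 1, every term
    C(L,l) (r tau - 1)^l G_l(c/tau) of the bracket strictly decreases in c, the
    bracket strictly increases, and so does its integral against the positive
    density f over [1/tau, 1]; the first integral of P_d^s does not depend on c. *)

From Stdlib Require Import Reals Factorial Lra Lia.
From Coquelicot Require Import Coquelicot.
Open Scope R_scope.

Lemma sum_f_R0_lt (a b : nat -> R) (n : nat) :
  (forall i, (i <= n)%nat -> a i < b i) -> sum_f_R0 a n < sum_f_R0 b n.
Proof.
  induction n as [|n IH]; intros Hab; simpl.
  - apply Hab; lia.
  - apply Rplus_lt_compat; [apply IH; intros; apply Hab |apply Hab]; lia.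
Qed.

Lemma Binomial_C_pos (n k : nat) : 0 < Binomial.C n k.
Proof.
  apply Rdiv_lt_0_compat; [|apply Rmult_lt_0_compat]; apply INR_fact_lt_0.
Qed.

Lemma is_derive_pow_div_fact (k : nat) (x : R) :
  is_derive (fun t => t ^ S k / INR (fact (S k))) x (x ^ k / INR (fact k)).
Proof.
  auto_derive; [reflexivity|].
  change (match k with 0%nat => 1 | S _ => INR k + 1 end) with (INR (S k)).
  change (fact k + k * fact k)%nat with (fact (S k)).
  rewrite fact_simpl, mult_INR.
  field; split; [apply INR_fact_neq_0 | apply not_0_INR; lia].
Qed.

Lemma is_derive_exp_partial_sum (k : nat) (x : R) :
  is_derive (fun t => sum_f_R0 (fun n => t ^ n / INR (fact n)) k) x
    (sum_f_R0 (fun n => x ^ n / INR (fact n)) k - x ^ k / INR (fact k)).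
Proof.
  induction k as [|k IH]; simpl sum_f_R0.
  - auto_derive; [reflexivity | simpl; field].
  - pose proof (is_derive_plus _ _ _ _ _ IH (is_derive_pow_div_fact k x)) as Hsum.
    revert Hsum; unfold plus; simpl; intros Hsum.
    replace (_ - _) with
      (sum_f_R0 (fun n => x ^ n / INR (fact n)) k - x ^ k / INR (fact k)
       + x ^ k / INR (fact k)) by ring.
    exact Hsum.
Qed.

Lemma is_derive_G (l : nat) (x : R) :
  is_derive (G l) x (- (exp (- x) * (x ^ (l - 1) / INR (fact (l - 1))))).
Proof.
  unfold G.
  pose proof (is_derive_exp_partial_sum (l - 1) x) as Hsum.
  assert (Hexp : is_derive (fun t => exp (- t)) x (- exp (- x)))
    by (auto_derive; [reflexivity | ring]).
  pose proof (is_derive_mult _ _ _ _ _ Hexp Hsum Rmult_comm) as Hprod.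
  revert Hprod; unfold plus, mult; simpl; intros Hprod.
  replace (- _) with
    (- exp (- x) * sum_f_R0 (fun n => x ^ n / INR (fact n)) (l - 1)
     + exp (- x) * (sum_f_R0 (fun n => x ^ n / INR (fact n)) (l - 1)
                    - x ^ (l - 1) / INR (fact (l - 1)))) by ring.
  exact Hprod.
Qed.

Lemma G_strictly_decreasing (l : nat) (x1 x2 : R) :
  0 <= x1 -> x1 < x2 -> G l x2 < G l x1.
Proof.
  intros Hx1 Hx12.
  destruct (MVT_cor2 (G l) (fun x => - (exp (- x) * (x ^ (l - 1) / INR (fact (l - 1)))))
              x1 x2 Hx12) as [y [Hdiff Hy]].
  - intros y _; apply is_derive_Reals, is_derive_G.
  - assert (0 < exp (- y) * (y ^ (l - 1) / INR (fact (l - 1)))).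
    { apply Rmult_lt_0_compat; [apply exp_pos|].
      apply Rdiv_lt_0_compat; [apply pow_lt; lra | apply INR_fact_lt_0]. }
    nra.
Qed.

Lemma inner_strictly_increasing (m Ks : nat) (tau c1 c2 r : R) :
  0 < tau -> 1 < r * tau -> 0 <= c1 -> c1 < c2 ->
  inner m Ks tau c1 r < inner m Ks tau c2 r.
Proof.
  intros Htau Hrtau Hc1 Hc12; unfold inner, sum_f.
  apply Rplus_lt_compat_l, Ropp_lt_contravar, Rmult_lt_compat_l.
  { apply Rinv_0_lt_compat, pow_lt; lra. }
  apply sum_f_R0_lt; intros i _.
  apply Rmult_lt_compat_l.
  - apply Rmult_lt_0_compat; [apply Binomial_C_pos | apply pow_lt; lra].
  - apply G_strictly_decreasing.
    + apply Rmult_le_pos; [lra | apply Rlt_le, Rinv_0_lt_compat; lra].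
    + apply Rmult_lt_compat_r; [apply Rinv_0_lt_compat|]; lra.
Qed.

Lemma fdens_pos (m Ks : nat) (r : R) : 0 < r < 1 -> 0 < fdens m Ks r.
Proof.
  intros Hr; unfold fdens.
  apply Rmult_lt_0_compat; [apply Rmult_lt_0_compat|].
  - apply Rdiv_lt_0_compat; [|apply Rmult_lt_0_compat]; apply INR_fact_lt_0.
  - apply pow_lt; lra.
  - apply pow_lt; lra.
Qed.

Lemma continuous_fdens_inner (m Ks : nat) (tau c r : R) :
  0 < tau -> 0 < r -> continuous (fun r => fdens m Ks r * inner m Ks tau c r) r.
Proof.
  intros Htau Hr; apply continuity_pt_filterlim.
  unfold fdens, inner, sum_f.
  apply continuity_pt_mult; [reg|].
  apply continuity_pt_minus; [reg|].
  apply continuity_pt_mult.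
  - apply continuity_pt_inv; [reg | apply pow_nonzero; nra].
  - apply continuity_pt_finite_SF; intros; reg.
Qed.

Theorem proposition1 (m Ks : nat) (tau : R) :
  (2 <= m)%nat -> (m < Ks)%nat -> 1 < tau ->
  forall c1 c2 : R, 0 <= c1 -> c1 < c2 -> Pds m Ks tau c1 < Pds m Ks tau c2.
Proof.
  intros _ _ Htau c1 c2 Hc1 Hc12.
  assert (Hinv_pos : 0 < / tau) by (apply Rinv_0_lt_compat; lra).
  assert (Hinv_lt1 : / tau < 1) by (rewrite <- Rinv_1; apply Rinv_lt_contravar; lra).
  unfold Pds; apply Rplus_lt_compat_l, RInt_lt; [lra | intros; apply continuous_fdens_inner; lra .. |].
  intros r [Hr_low Hr_high].
  apply Rmult_lt_compat_l; [apply fdens_pos; lra|].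
  apply inner_strictly_increasing; try lra.
  apply (Rmult_lt_compat_r tau) in Hr_low; [|lra].
  rewrite Rinv_l in Hr_low; lra.
Qed.
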